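(* For every $n\ge 2$, every symmetric pseudo-Boolean function of $n$ variables has a quadratization using at most $n-2$ auxiliary variables.
   Context: A pseudo-Boolean function is a map $f:\{0,1\}^n\to\mathbb{R}$; it is symmetric if its value depends only on the Hamming weight $\sum_j x_j$. A quadratization of $f$ using $m$ auxiliary variables is a polynomial $g(x,y)$ of degree at most $2$ in the variables $x_1,\ldots,x_n,y_1,\ldots,y_m$ such that $f(x)=\min\{g(x,y):y\in\{0,1\}^m\}$ for all $x\in\{0,1\}^n$. *)

From HB Require Import structures.
From mathcomp Require Import all_boot all_order all_algebra.
Set Implicit Arguments. Unset Strict Implicit. Unset Printing Implicit Defensive.
Import Order.TTheory GRing.Theory Num.Theory.
Local Open Scope ring_scope.

Definition weight (n : nat) (x : 'I_n -> bool) : nat := (\sum_(i < n) x i)%N.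

Definition symmetric_pbf (R : realFieldType) (n : nat) (f : ('I_n -> bool) -> R) :=
  forall x x' : 'I_n -> bool, weight x = weight x' -> f x = f x'.

Definition quad_eval (R : realFieldType) (N : nat) (c : R) (a : 'I_N -> R)
  (Q : 'I_N -> 'I_N -> R) (z : 'I_N -> bool) : R :=
  c + \sum_(i < N) a i * (z i)%:R
    + \sum_(i < N) \sum_(j < N) Q i j * (z i)%:R * (z j)%:R.

Definition concat (n m : nat) (x : 'I_n -> bool) (y : 'I_m -> bool) : 'I_(n + m) -> bool :=
  fun i => match split i with inl j => x j | inr k => y k end.

(* g(x,y) (given by c, a, Q) is a quadratization of f with m auxiliary variables:
   f(x) = min_{y in {0,1}^m} g(x,y) for all x. *)
Definition is_quadratization (R : realFieldType) (n m : nat) (f : ('I_n -> bool) -> R)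
  (c : R) (a : 'I_(n + m) -> R) (Q : 'I_(n + m) -> 'I_(n + m) -> R) : Prop :=
  forall x : 'I_n -> bool,
    (exists y : 'I_m -> bool, f x = quad_eval c a Q (concat x y)) /\
    (forall y : 'I_m -> bool, f x <= quad_eval c a Q (concat x y)).

From HB Require Import structures.
From mathcomp Require Import all_boot all_order all_algebra.
From mathcomp Require Import ring zify.
Import Order.TTheory GRing.Theory Num.Theory.
Local Open Scope ring_scope.
Set Implicit Arguments. Unset Strict Implicit.

(* A symmetric f is a function h of the weight k in {0, ..., n}. Subtracting a
   suitable quadratic in k, h becomes concave with at least one vanishing second
   difference, so by the discrete Taylor formula it is an affine function plus
   n - 2 terms of the form -l (k - t)_+ with l >= 0. Each such term is the minimum
   over a Boolean y of the quadratic l y (t - k), with k linear in x. *)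

Lemma split_lshift m n (i : 'I_m) : split (lshift n i) = inl i.
Proof. exact: (unsplitK (inl i)). Qed.

Lemma split_rshift m n (j : 'I_n) : split (rshift m j) = inr j.
Proof. exact: (unsplitK (inr j)). Qed.

Lemma weight_le n (x : 'I_n -> bool) : (weight x <= n)%N.
Proof.
rewrite /weight -[leqRHS]card_ord -sum1_card.
by apply: leq_sum => i _; exact: leq_b1.
Qed.

Lemma weight_prefix n k : (k <= n)%N -> weight (fun i : 'I_n => (i < k)%N) = k.
Proof.
move=> le_kn; rewrite /weight -(big_mkord xpredT (fun i => nat_of_bool (i < k)%N)).
rewrite (big_cat_nat (leq0n k) le_kn) /=.
rewrite (eq_big_nat _ _ (F2 := fun _ => 1%N)); last by move=> i /andP[_ ->].
rewrite [X in (_ + X)%N](eq_big_nat _ _ (F2 := fun _ => 0%N)); last first.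
  by move=> i /andP[le_ki _]; rewrite ltnNge le_ki.
by rewrite !sum_nat_const_nat muln1 muln0 addn0 subn0.
Qed.

Section DiscreteTaylor.
Variable R : realFieldType.
Implicit Types (g : nat -> R) (N k : nat).

Definition ddiff g i := g i.+2 - 2 * g i.+1 + g i.

Lemma diff_expansion g N k : (k <= N)%N ->
  g k.+1 - g k = g 1%N - g 0%N + \sum_(i < N) ddiff g i * (i < k)%N%:R.
Proof.
elim: k => [_|k IHk lt_kN].
  by rewrite big1 ?addr0 // => i _; rewrite mulr0.
have -> : \sum_(i < N) ddiff g i * (i < k.+1)%N%:R =
          \sum_(i < N) ddiff g i * (i < k)%N%:R + ddiff g k.
  rewrite [LHS](bigD1_ord (Ordinal lt_kN)) //= [X in _ = X + _](bigD1_ord (Ordinal lt_kN)) //=.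
  rewrite ltnn ltnSn mulr0 mulr1 add0r addrC; congr (_ + _).
  apply: eq_bigr => j _; congr (_ * _%:R); rewrite /bump.
  case: (leqP k j) => kj /=; rewrite ?add1n ?add0n.
    by have [-> ->] : (j.+1 < k.+1)%N = false /\ (j.+1 < k)%N = false by lia.
  by have [-> ->] : (j < k.+1)%N /\ (j < k)%N by lia.
rewrite addrA -(IHk (ltnW lt_kN)) /ddiff; ring.
Qed.

Lemma hinge_expansion g N k : (k <= N.+1)%N ->
  g k = g 0%N + k%:R * (g 1%N - g 0%N) + \sum_(i < N) ddiff g i * (k - i.+1)%:R.
Proof.
elim: k => [_|k IHk]; last rewrite ltnS => le_kN.
  by rewrite big1 ?mul0r ?addr0 // => i _; rewrite sub0n mulr0.
have step i : (k.+1 - i.+1)%:R = (k - i.+1)%:R + (i < k)%N%:R :> R.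
  by rewrite -natrD; congr (_%:R); case: (ltnP i k) => /=; lia.
rewrite -[g k.+1](subrK (g k)) (diff_expansion g le_kN) (IHk (leqW le_kN)).
under [X in _ = _ + X]eq_bigr do rewrite step mulrDr.
rewrite big_split /= -[k.+1]addn1 natrD; ring.
Qed.

End DiscreteTaylor.

Section HingeQuadratization.
Variable R : realFieldType.

Lemma neg_hingeE (l : R) (t k : nat) :
  - l * (k - t)%:R = l * (t < k)%N%:R * (t%:R - k%:R).
Proof.
case: (leqP k t) => [le_kt | lt_tk] /=.
  by rewrite (eqP le_kt) !mulr0 mul0r.
by rewrite natrB 1?ltnW // mulr1 mulNr -mulrN opprB.
Qed.

Lemma neg_hinge_le (l : R) (b : bool) (t k : nat) : 0 <= l ->
  - l * (k - t)%:R <= l * b%:R * (t%:R - k%:R).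
Proof.
move=> l_ge0; rewrite neg_hingeE.
case: b; case: (ltnP t k) => /= tk; rewrite ?mulr0 ?mul0r ?mulr1 //.
- by rewrite mulr_ge0 // subr_ge0 ler_nat.
- by rewrite -opprB mulrN oppr_le0 mulr_ge0 // subr_ge0 ler_nat ltnW.
Qed.

Variables n m : nat.
Implicit Types (B C : R) (lam : 'I_m -> R) (t : 'I_m -> nat).

Definition hinge_lin_coef B lam t (i : 'I_(n + m)) : R :=
  match split i with inl _ => B | inr j => lam j * (t j)%:R end.

Definition hinge_quad_coef C lam (i i' : 'I_(n + m)) : R :=
  match split i, split i' with
  | inl _, inl _ => C
  | inr j, inl _ => - lam j
  | _, _ => 0
  end.

Lemma quad_eval_hinge c B C lam t x y :
  quad_eval c (hinge_lin_coef B lam t) (hinge_quad_coef C lam) (concat x y) =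
  c + B * (weight x)%:R + C * (weight x)%:R ^+ 2 +
  \sum_(j < m) lam j * (y j)%:R * ((t j)%:R - (weight x)%:R).
Proof.
rewrite /quad_eval /weight natr_sum !big_split_ord /=.
rewrite /hinge_lin_coef /hinge_quad_coef /concat.
under eq_bigr do rewrite split_lshift.
under [X in _ + (_ + X) + _]eq_bigr do rewrite split_rshift.
under [X in _ + _ + (X + _)]eq_bigr => i _.
  rewrite split_lshift big_split_ord /= [X in _ + X]big1 => [|j _]; last by rewrite split_rshift !mul0r.
  under eq_bigr => j _ do rewrite !split_lshift.
  over.
under [X in _ + _ + (_ + X)]eq_bigr => i _.
  rewrite split_rshift big_split_ord /= [X in _ + X]big1 => [|j _]; last by rewrite split_rshift !mul0r.
  under eq_bigr => j _ do rewrite !split_lshift.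
  over.
set w := \sum_(i < n) (x i)%:R.
have -> : \sum_(i < n) (\sum_(j < n) C * (x i)%:R * (x j)%:R + 0) = C * w ^+ 2.
  rewrite expr2 mulr_suml mulr_sumr; apply: eq_bigr => i _.
  by rewrite addr0 mulrA mulr_sumr.
have -> : \sum_(j < m) lam j * (y j)%:R * ((t j)%:R - w) =
    \sum_(j < m) lam j * (t j)%:R * (y j)%:R + \sum_(j < m) - lam j * (y j)%:R * w.
  by rewrite -big_split; apply: eq_bigr => j _ /=; ring.
under [X in _ + (_ + X)]eq_bigr => j _ do rewrite /= addr0 -mulr_sumr.
by rewrite -mulr_sumr -/w; ring.
Qed.

Lemma hinge_sum_quadratization (f : ('I_n -> bool) -> R) c B C lam t :
    (forall j, 0 <= lam j) ->
    (forall x, f x = c + B * (weight x)%:R + C * (weight x)%:R ^+ 2 +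
                     \sum_(j < m) - lam j * (weight x - t j)%:R) ->
  is_quadratization f c (hinge_lin_coef B lam t) (hinge_quad_coef C lam).
Proof.
move=> lam_ge0 fE x; rewrite fE.
split => [|y]; [exists (fun j => (t j < weight x)%N) | ]; rewrite quad_eval_hinge.
  congr (_ + _).
  by apply: eq_bigr => j _; rewrite neg_hingeE.
by rewrite lerD2l; apply: ler_sum => j _; apply: neg_hinge_le.
Qed.

End HingeQuadratization.

Lemma hinge_decomposition (R : realFieldType) (h : nat -> R) (N : nat) :
  exists (c B C : R) (lam : 'I_N -> R) (t : 'I_N -> nat),
    (forall j, 0 <= lam j) /\
    forall k, (k <= N.+2)%N ->
      h k = c + B * k%:R + C * k%:R ^+ 2 + \sum_(j < N) - lam j * (k - t j)%:R.
Proof.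
have [p _ ddiff_le_p] := arg_maxP (fun i : 'I_N.+1 => ddiff h i) (isT : xpredT ord0).
(* Removing the quadratic with half the largest second difference makes every
   second difference of g nonpositive and the one at p zero, so the expansion of g
   needs one hinge fewer. *)
pose C := ddiff h p / 2.
pose g k := h k - C * k%:R ^+ 2.
have ddiff_g i : ddiff g i = ddiff h i - ddiff h p.
  rewrite /g /C; set D := ddiff h p.
  by rewrite /ddiff -[i.+2]addn2 -[i.+1]addn1 !natrD; field.
exists (g 0%N), (g 1%N - g 0%N), C, (fun j => ddiff h p - ddiff h (lift p j)),
  (fun j => (lift p j).+1).
split => [j|k le_kN]; first by rewrite subr_ge0; apply: ddiff_le_p.
rewrite -[h k](subrK (C * k%:R ^+ 2)) -/(g k) (hinge_expansion g le_kN).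
rewrite (bigD1_ord p) //= ddiff_g subrr mul0r add0r.
under eq_bigr do rewrite ddiff_g -opprB.
ring.
Qed.

Theorem theorem3 (R : realFieldType) (n : nat) (hn : (2 <= n)%N)
  (f : ('I_n -> bool) -> R) (hf : symmetric_pbf f) :
  exists m : nat, (m <= n - 2)%N /\
    exists (c : R) (a : 'I_(n + m) -> R) (Q : 'I_(n + m) -> 'I_(n + m) -> R),
      is_quadratization f c a Q.
Proof.
case: n hn f hf => [|[|N]] // _ f hf.
exists N; split; first by rewrite subn2.
pose h k := f (fun i : 'I_N.+2 => (i < k)%N).
have [c [B [C [lam [t [lam_ge0 hE]]]]]] := hinge_decomposition h N.
exists c, (hinge_lin_coef B lam t), (hinge_quad_coef C lam).
apply: hinge_sum_quadratization => // x.
have le_wN := weight_le x.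
by rewrite -hE //; apply: hf; rewrite weight_prefix.
Qed.
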